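(* Let $X$ be a real Banach space and $\alpha,\beta>0$. Then: (1) for any $x\in S_X$, a sequence $(y_n)$ is a maximizing sequence in $B_X$ (respectively $S_X$) for $\alpha x$ if and only if it is a maximizing sequence in $B_X$ (respectively $S_X$) for $\beta x$; (2) $B_X$ has property $\mathsf P$ on $\alpha S_X$ if and only if $B_X$ has property $\mathsf P$ on $\beta S_X$; (3) $S_X$ has property $\mathsf P$ on $\alpha S_X$ if and only if $S_X$ has property $\mathsf P$ on $\beta S_X$; where $\mathsf P$ is any one of: remotal, uniquely remotal, strongly remotal, SUR, USUR, sup-compact.
   Context: $B_X,S_X$ are the closed unit ball and unit sphere. For non-empty bounded $F$, $x\in X$, $\delta\ge0$: $r(F,x)=\sup_{y\in F}\|x-y\|$, $Q_F(x,\delta)=\{y\in F:\|x-y\|\ge r(F,x)-\delta\}$, $Q_F(x)=Q_F(x,0)$. A maximizing sequence in $F$ for $x$ is a sequence $(y_n)$ in $F$ with $\|x-y_n\|\to r(F,x)$. On a set $A$, $F$ is: remotal if $Q_F(x)\neq\emptyset$ for each $x\in A$; uniquely remotal if $Q_F(x)$ is a singleton for each $x\in A$; strongly remotal if for every $x\in A$ and $\epsilon>0$ there is $\delta>0$ with $Q_F(x,\delta)\subseteq Q_F(x)+\epsilon B_X$; SUR if uniquely remotal and strongly remotal; USUR if uniquely remotal and for every $\epsilon>0$ there is $\delta>0$ with $Q_F(x,\delta)\subseteq Q_F(x)+\epsilon B_X$ for all $x\in A$; sup-compact if for each $x\in A$ every maximizing sequence in $F$ for $x$ has a subsequence converging to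 an element of $F$. *)

From HB Require Import structures.
From mathcomp Require Import all_boot all_order all_algebra.
From mathcomp Require Import all_classical all_reals all_analysis.
Set Implicit Arguments. Unset Strict Implicit. Unset Printing Implicit Defensive.
Import Order.TTheory GRing.Theory Num.Theory.
Import numFieldNormedType.Exports.
Local Open Scope classical_set_scope.
Local Open Scope ring_scope.

Section Remotality.
Variables (R : realType) (X : normedModType R).

Definition unit_ball : set X := [set y | `|y| <= 1].
Definition unit_sphere : set X := [set y | `|y| = 1].

Definition scale_set (a : R) (S : set X) : set X := [set a *: y | y in S].

Definition farthest_dist (F : set X) (x : X) : R := sup [set `|x - y| | y in F].

Definition Qset (F : set X) (x : X) (delta : R) : set X :=
  [set y | F y /\ farthest_dist F x - delta <= `|x - y|].

Definition maximizing_seq (F : set X) (x : X) (y : nat -> X) : Prop :=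
  (forall n, F (y n)) /\ (fun n => `|x - y n|) @ \oo --> farthest_dist F x.

(* A `<=` B + eps B_X, written out *)
Definition subset_plus_ball (A B : set X) (eps : R) : Prop :=
  forall z, A z -> exists2 b, B b & `|z - b| <= eps.

Definition remotal_on (F A : set X) : Prop :=
  forall x, A x -> Qset F x 0 !=set0.

Definition uniquely_remotal_on (F A : set X) : Prop :=
  forall x, A x -> exists y, Qset F x 0 = [set y].

Definition strongly_remotal_on (F A : set X) : Prop :=
  forall x, A x -> forall eps : R, 0 < eps ->
    exists2 delta : R, 0 < delta &
      subset_plus_ball (Qset F x delta) (Qset F x 0) eps.

Definition SUR_on (F A : set X) : Prop :=
  uniquely_remotal_on F A /\ strongly_remotal_on F A.

Definition USUR_on (F A : set X) : Prop :=
  uniquely_remotal_on F A /\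
  forall eps : R, 0 < eps ->
    exists2 delta : R, 0 < delta &
      forall x, A x -> subset_plus_ball (Qset F x delta) (Qset F x 0) eps.

Definition sup_compact_on (F A : set X) : Prop :=
  forall x, A x -> forall y : nat -> X, maximizing_seq F x y ->
    exists phi : nat -> nat,
      {homo phi : m n / (m < n)%N >-> (m < n)%N} /\
      exists2 z, F z & (y \o phi) @ \oo --> z.

End Remotality.
Arguments unit_ball {R X}.
Arguments unit_sphere {R X}.


Inductive remotal_property :=
  | Remotal | UniquelyRemotal | StronglyRemotal | SUR | USUR | SupCompact.

Definition has_property (R : realType) (X : normedModType R)
  (P : remotal_property) (F A : set X) : Prop :=
  match P with
  | Remotal => remotal_on F A
  | UniquelyRemotal => uniquely_remotal_on F A
  | StronglyRemotal => strongly_remotal_on F A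
  | SUR => SUR_on F A
  | USUR => USUR_on F A
  | SupCompact => sup_compact_on F A
  end.

From HB Require Import structures.
From mathcomp Require Import all_boot all_order all_algebra.
From mathcomp Require Import all_classical all_reals all_analysis.
From mathcomp Require Import lra.
Import Order.TTheory GRing.Theory Num.Theory.
Import numFieldNormedType.Exports.
Local Open Scope classical_set_scope.
Local Open Scope ring_scope.
Set Implicit Arguments. Unset Strict Implicit.

(* For a unit vector x and F inside B_X with -x in F, r(F, t x) = t + 1 for
   t > 0, so Q_F(t x, d) consists of the y in F whose gap t + 1 - |t x - y| is
   at most d.  Two triangle inequalities bound the gap at b by (1 + b / a)
   times the gap at a, whence Q_F(a x, d) is contained in Q_F(b x, (1 + b/a) d):
   farthest points and maximizing sequences for a x and b x coincide, with
   uniform control of the deltas. *)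

Section DirectionalGap.
Variables (R : realType) (X : normedModType R).
Implicit Types (x y : X) (a b t : R).

Definition dir_gap x y t : R := t + 1 - `|t *: x - y|.

Lemma dir_gap_ge0 x y t : `|x| <= 1 -> `|y| <= 1 -> 0 <= t -> 0 <= dir_gap x y t.
Proof.
move=> x1 y1 t0; rewrite subr_ge0; apply: le_trans (ler_normB _ _) _.
by rewrite normrZ ger0_norm // lerD // -{2}[t]mulr1 ler_wpM2l.
Qed.

Lemma dir_gap_nondecreasing x y a b : `|x| <= 1 -> b <= a ->
  dir_gap x y b <= dir_gap x y a.
Proof.
move=> x1 ba; rewrite /dir_gap.
have : `|a *: x - y| <= (a - b) + `|b *: x - y|.
  have -> : a *: x - y = (a - b) *: x + (b *: x - y) by rewrite scalerBl addrA subrK.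
  apply: le_trans (ler_normD _ _) _; rewrite normrZ ger0_norm ?subr_ge0 //.
  by rewrite lerD2r -{2}[a - b]mulr1 ler_wpM2l // subr_ge0.
lra.
Qed.

Lemma dir_gap_ratio_le x y a b : `|y| <= 1 -> 0 <= a -> a <= b ->
  a * dir_gap x y b <= b * dir_gap x y a.
Proof.
move=> y1 a0 ab; rewrite /dir_gap.
have : b * `|a *: x - y| <= a * `|b *: x - y| + (b - a).
  have -> : b * `|a *: x - y| = `|a *: (b *: x - y) + (b - a) *: (- y)|.
    rewrite -[b in LHS]ger0_norm ?(le_trans a0) // -normrZ.
    by congr `|_|; rewrite !scalerBr !scalerA mulrC scalerN scalerBl opprB addrA subrK.
  apply: le_trans (ler_normD _ _) _; rewrite !normrZ normrN !ger0_norm ?subr_ge0 //.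
  by rewrite lerD2l -{2}[b - a]mulr1 ler_wpM2l // subr_ge0.
nra.
Qed.

Lemma dir_gap_le x y a b : `|x| <= 1 -> `|y| <= 1 -> 0 < a -> 0 < b ->
  dir_gap x y b <= (1 + b / a) * dir_gap x y a.
Proof.
move=> x1 y1 a0 b0; have ga := dir_gap_ge0 x1 y1 (ltW a0).
have ba0 : 0 <= b / a by rewrite divr_ge0 ?ltW.
case: (leP a b) => [ab|ba].
- have := dir_gap_ratio_le x y1 (ltW a0) ab.
  rewrite mulrC -ler_pdivlMr // mulrAC => /le_trans; apply.
  by apply: ler_wpM2r => //; rewrite lerDr.
- apply: le_trans (dir_gap_nondecreasing y x1 (ltW ba)) _.
  by rewrite -{1}[dir_gap x y a]mul1r; apply: ler_wpM2r => //; rewrite lerDl.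
Qed.

End DirectionalGap.

Section FarthestPoints.
Variables (R : realType) (X : normedModType R) (F : set X).
Hypothesis F_ball : F `<=` unit_ball.
Hypothesis F_antipodal : forall x : X, unit_sphere x -> F (- x).
Implicit Types (x : X) (a b t d : R).

Lemma farthest_dist_scale x t : unit_sphere x -> 0 < t ->
  farthest_dist F (t *: x) = t + 1.
Proof.
move=> x1 t0; rewrite /farthest_dist.
have ub : ubound [set `|t *: x - y| | y in F] (t + 1).
  move=> _ [y Fy <-]; rewrite -subr_ge0 -[e in 0 <= e]/(dir_gap x y t).
  by apply: dir_gap_ge0; [rewrite x1 | exact: F_ball | exact: ltW].
have attained : [set `|t *: x - y| | y in F] (t + 1).
  exists (- x); first exact: F_antipodal.
  rewrite opprK -{2}(scale1r x) -scalerDl normrZ x1 mulr1 gtr0_norm //.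
  by rewrite addr_gt0.
apply/le_anti/andP; split; first by apply: ge_sup => //; exists (t + 1).
by apply: sup_upper_bound => //; split; [exists (t + 1) | exists (t + 1)].
Qed.

Lemma Qset_scaleE x t d : unit_sphere x -> 0 < t ->
  Qset F (t *: x) d = [set y | F y /\ dir_gap x y t <= d].
Proof.
move=> x1 t0; rewrite /Qset farthest_dist_scale //.
by apply/seteqP; split => y [Fy h]; split => //; move: h; rewrite /dir_gap => h; lra.
Qed.

Lemma Qset_scale_sub x a b d : unit_sphere x -> 0 < a -> 0 < b -> 0 <= d ->
  Qset F (a *: x) d `<=` Qset F (b *: x) ((1 + b / a) * d).
Proof.
move=> x1 a0 b0 d0; rewrite !Qset_scaleE // => y [Fy ya]; split => //.
have x1' : `|x| <= 1 by rewrite x1.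
apply: le_trans (dir_gap_le x1' (F_ball Fy) a0 b0) _.
by rewrite ler_wpM2l // addr_ge0 // divr_ge0 ?ltW.
Qed.

Lemma Qset0_scale x a b : unit_sphere x -> 0 < a -> 0 < b ->
  Qset F (a *: x) 0 = Qset F (b *: x) 0.
Proof.
move=> x1 a0 b0; apply/seteqP; split.
  by have := Qset_scale_sub x1 a0 b0 (lexx 0); rewrite mulr0.
by have := Qset_scale_sub x1 b0 a0 (lexx 0); rewrite mulr0.
Qed.

Lemma maximizing_seq_scaleE x t (y : nat -> X) : unit_sphere x -> 0 < t ->
  maximizing_seq F (t *: x) y <->
  (forall n, F (y n)) /\ (fun n => dir_gap x (y n) t) @ \oo --> 0.
Proof.
move=> x1 t0; rewrite /maximizing_seq farthest_dist_scale //.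
have -> : (fun n => dir_gap x (y n) t) = - (fun n => `|t *: x - y n| - (t + 1)).
  by apply/funext => n; rewrite /dir_gap /= opprB.
by rewrite -oppr0 cvgNP subr_cvg0.
Qed.

Lemma maximizing_seq_scale x a b (y : nat -> X) : unit_sphere x -> 0 < a -> 0 < b ->
  maximizing_seq F (a *: x) y -> maximizing_seq F (b *: x) y.
Proof.
move=> x1 a0 b0; rewrite !maximizing_seq_scaleE // => -[Fy lim]; split => //.
have x1' : `|x| <= 1 by rewrite x1.
apply: (@squeeze_cvgr _ _ _ _ (cst 0) (fun n => (1 + b / a) * dir_gap x (y n) a)).
- near=> n; rewrite dir_gap_ge0 ?(ltW b0) ?(F_ball (Fy n)) //=.
  exact: dir_gap_le (F_ball (Fy n)) a0 b0.
- exact: cvg_cst.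
- by rewrite -(mulr0 (1 + b / a)); exact: cvgM (cvg_cst _) lim.
Unshelve. all: by end_near.
Qed.

Section ScaleTransfer.
Variables (a b : R).
Hypotheses (a_gt0 : 0 < a) (b_gt0 : 0 < b).

Let ratio_gt0 : 0 < 1 + a / b. Proof. by rewrite addr_gt0 ?divr_gt0. Qed.

Lemma remotal_on_scale :
  remotal_on F (scale_set a unit_sphere) -> remotal_on F (scale_set b unit_sphere).
Proof.
by move=> h _ [x x1 <-]; rewrite -(Qset0_scale x1 a_gt0 b_gt0); apply: h; exists x.
Qed.

Lemma uniquely_remotal_on_scale :
  uniquely_remotal_on F (scale_set a unit_sphere) ->
  uniquely_remotal_on F (scale_set b unit_sphere).
Proof.
by move=> h _ [x x1 <-]; rewrite -(Qset0_scale x1 a_gt0 b_gt0); apply: h; exists x.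
Qed.

Lemma subset_plus_ball_scale x d eps : unit_sphere x -> 0 < d ->
  subset_plus_ball (Qset F (a *: x) d) (Qset F (a *: x) 0) eps ->
  subset_plus_ball (Qset F (b *: x) (d / (1 + a / b))) (Qset F (b *: x) 0) eps.
Proof.
move=> x1 d0 h z zQ; rewrite -(Qset0_scale x1 a_gt0 b_gt0); apply: h.
have := Qset_scale_sub x1 b_gt0 a_gt0 (ltW (divr_gt0 d0 ratio_gt0)) zQ.
by rewrite mulrC divfK ?gt_eqF.
Qed.

Lemma strongly_remotal_on_scale :
  strongly_remotal_on F (scale_set a unit_sphere) ->
  strongly_remotal_on F (scale_set b unit_sphere).
Proof.
move=> h _ [x x1 <-] eps eps0.
have ax : scale_set a unit_sphere (a *: x) by exists x.
have [d d0 hd] := h (a *: x) ax eps eps0.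
exists (d / (1 + a / b)); first exact: divr_gt0.
exact: subset_plus_ball_scale.
Qed.

Lemma SUR_on_scale :
  SUR_on F (scale_set a unit_sphere) -> SUR_on F (scale_set b unit_sphere).
Proof.
by case=> ? ?; split; [exact: uniquely_remotal_on_scale | exact: strongly_remotal_on_scale].
Qed.

Lemma USUR_on_scale :
  USUR_on F (scale_set a unit_sphere) -> USUR_on F (scale_set b unit_sphere).
Proof.
case=> ur h; split; first exact: uniquely_remotal_on_scale.
move=> eps eps0; have [d d0 hd] := h eps eps0.
exists (d / (1 + a / b)); first exact: divr_gt0.
by move=> _ [x x1 <-]; apply: subset_plus_ball_scale => //; apply: hd; exists x.
Qed.

Lemma sup_compact_on_scale :
  sup_compact_on F (scale_set a unit_sphere) -> sup_compact_on F (scale_set b unit_sphere).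
Proof.
move=> h _ [x x1 <-] y ymax; apply: (h (a *: x)); first by exists x.
exact: maximizing_seq_scale ymax.
Qed.

Lemma has_property_scale P :
  has_property P F (scale_set a unit_sphere) -> has_property P F (scale_set b unit_sphere).
Proof.
case: P.
- exact: remotal_on_scale.
- exact: uniquely_remotal_on_scale.
- exact: strongly_remotal_on_scale.
- exact: SUR_on_scale.
- exact: USUR_on_scale.
- exact: sup_compact_on_scale.
Qed.

End ScaleTransfer.

End FarthestPoints.

Lemma unit_sphereN (R : realType) (X : normedModType R) (x : X) :
  unit_sphere x -> unit_sphere (- x).
Proof. by rewrite /unit_sphere /= normrN. Qed.

Lemma unit_sphere_sub_ball (R : realType) (X : normedModType R) :
  @unit_sphere R X `<=` unit_ball.
Proof. by move=> x; rewrite /unit_sphere /unit_ball /= => ->. Qed.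

Theorem corollary2p14 (R : realType) (X : completeNormedModType R)
    (alpha beta : R) (halpha : 0 < alpha) (hbeta : 0 < beta) :
  (forall x : X, unit_sphere x -> forall y : nat -> X,
     (maximizing_seq unit_ball (alpha *: x) y <->
      maximizing_seq unit_ball (beta *: x) y) /\
     (maximizing_seq unit_sphere (alpha *: x) y <->
      maximizing_seq unit_sphere (beta *: x) y)) /\
  (forall P : remotal_property,
     has_property P (@unit_ball R X) (scale_set alpha unit_sphere) <->
     has_property P unit_ball (scale_set beta (@unit_sphere R X))) /\
  (forall P : remotal_property,
     has_property P (@unit_sphere R X) (scale_set alpha unit_sphere) <->
     has_property P unit_sphere (scale_set beta (@unit_sphere R X))).
Proof.
have ball_sub : @unit_ball R X `<=` unit_ball by [].
have ball_antipodal (x : X) : unit_sphere x -> unit_ball (- x).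
  by move=> /unit_sphereN; apply: unit_sphere_sub_ball.
have sphere_sub := @unit_sphere_sub_ball R X.
have sphere_antipodal := @unit_sphereN R X.
split; [|split].
- by move=> x x1 y; split; split; apply: maximizing_seq_scale.
- by move=> P; split; apply: has_property_scale.
- by move=> P; split; apply: has_property_scale.
Qed.
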